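(* Let $q$ be a prime power, let $\gamma$ be a primitive element of $\mathbb{F}_{q^2}$, and for any integer $a$ let $h_a(x)\in\mathbb{F}_q[x]$ be the minimal polynomial of $\gamma^{-a}$ over $\mathbb{F}_q$. For integers $e_1,e_2$ let $\mathcal{C}_{((q+1)e_1,e_2)}$ be the cyclic code of length $q^2-1$ over $\mathbb{F}_q$ with parity-check polynomial $h_{(q+1)e_1}(x)h_{e_2}(x)$. Let $\mathcal{N}$ be the number of distinct cyclic codes of the form $\mathcal{C}_{((q+1)e_1,e_2)}$, of length $q^2-1$ and dimension $3$, where $e_1,e_2$ range over all integers with $\gcd(q-1,2e_1-e_2)=1$ and $\gcd(q+1,e_2)=1$. Then $$\mathcal{N}=\frac{\phi(q^2-1)(q-1)}{2},$$ where $\phi$ is Euler's totient function. *)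

From HB Require Import structures.
From mathcomp Require Import all_boot all_order all_algebra.
Set Implicit Arguments. Unset Strict Implicit. Unset Printing Implicit Defensive.
Import Order.TTheory GRing.Theory Num.Theory.
Local Open Scope ring_scope.

Definition is_minpoly (F L : fieldType) (iota : {rmorphism F -> L})
    (x : L) (p : {poly F}) : Prop :=
  [/\ p \is monic, root (map_poly iota p) x &
      forall r : {poly F}, r != 0 -> root (map_poly iota r) x ->
        (size p <= size r)%N].

Definition poly_of_word (F : fieldType) (n : nat) (c : 'rV[F]_n) : {poly F} :=
  \sum_(i < n) (c ord0 i)%:P * 'X^i.

(* Cyclic code of length n over F with parity-check polynomial h:
   the ideal of F[x]/(x^n - 1) generated by g = (x^n - 1)/h. *)
Definition cyclic_code_chk (F : finFieldType) (n : nat) (h : {poly F})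
    : {set 'rV[F]_n} :=
  [set c | (('X^n - 1) %/ h) %| poly_of_word c].

(* The Frobenius map x |-> x^q of F_{q^2} has order 2 and fixes exactly F_q.
   Hence gamma^{-(q+1)e1} lies in F_q and h_{(q+1)e1} is linear, whereas for
   gcd(e2, q+1) = 1 the element gamma^{-e2} is not fixed, so h_{e2} is the
   quadratic with roots gamma^{-e2} and gamma^{-q e2}.  The check polynomial
   thus has degree 3, is squarefree and divides x^n - 1 (n = q^2 - 1), and the
   code determines it.  Writing e2 = u + (q+1)e1, the codes are indexed by
   e1 mod q-1 and a unit u mod n, and the only coincidences are
   (e1, u) ~ (e1, qu), i.e. each code arises exactly twice. *)

From HB Require Import structures.
From mathcomp Require Import all_boot all_order all_algebra.
From mathcomp Require Import finfield zify ring.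
Import Order.TTheory GRing.Theory Num.Theory.
Local Open Scope ring_scope.

Set Implicit Arguments.
Unset Strict Implicit.
Unset Printing Implicit Defensive.

Section Words.
Variables (F : fieldType) (n : nat).

Definition word_of_poly (p : {poly F}) : 'rV[F]_n := \row_(i < n) p`_i.

Lemma coef_poly_of_word (c : 'rV[F]_n) (i : 'I_n) : (poly_of_word c)`_i = c ord0 i.
Proof.
rewrite /poly_of_word coef_sum (bigD1 i) //= big1 => [|j ne_ji].
  by rewrite coefCM coefXn eqxx mulr1 addr0.
by rewrite coefCM coefXn (inj_eq val_inj) eq_sym (negbTE ne_ji) mulr0.
Qed.

Lemma size_poly_of_word (c : 'rV[F]_n) : (size (poly_of_word c) <= n)%N.
Proof.
apply/leq_sizeP => k le_nk; rewrite /poly_of_word coef_sum big1 // => j _.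
by rewrite coefCM coefXn gtn_eqF ?mulr0 // (leq_trans (ltn_ord j)).
Qed.

Lemma word_of_polyK (p : {poly F}) :
  (size p <= n)%N -> poly_of_word (word_of_poly p) = p.
Proof.
move=> le_pn; apply/polyP => k; case: (ltnP k n) => [lt_kn|le_nk].
  by rewrite -[k]/(val (Ordinal lt_kn)) coef_poly_of_word mxE.
rewrite !nth_default // (leq_trans _ le_nk) //; exact: size_poly_of_word.
Qed.

Lemma poly_of_wordK : cancel (@poly_of_word F n) word_of_poly.
Proof. by move=> c; apply/rowP => i; rewrite mxE coef_poly_of_word [ord0]ord1. Qed.

Lemma poly_of_word_inj : injective (@poly_of_word F n).
Proof. exact: can_inj poly_of_wordK. Qed.

End Words.

Section CyclicCode.
Variables (F : finFieldType) (n : nat).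
Hypothesis n_gt0 : (0 < n)%N.

Section Generator.
Variable h : {poly F}.
Hypotheses (h_monic : h \is monic) (h_dvd : h %| 'X^n - 1).

Let g := ('X^n - 1) %/ h.

Lemma generator_monic : g \is monic.
Proof. by rewrite -(monicMr _ h_monic) divpK // -polyC1 monicXnsubC. Qed.

Lemma size_generator : (size g + size h = n.+2)%N.
Proof.
have g_gt0 : (0 < size g)%N by rewrite size_poly_gt0 monic_neq0 ?generator_monic.
move: (size_XnsubC (1 : F) n_gt0).
rewrite polyC1 -{1}(divpK h_dvd) size_mul ?monic_neq0 ?generator_monic //.
by move=> <-; rewrite prednK // addn_gt0 g_gt0.
Qed.

Lemma mem_cyclic_code_chk (c : 'rV[F]_n) :
  (c \in cyclic_code_chk n h) = (g %| poly_of_word c).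
Proof. by rewrite inE. Qed.

Lemma card_cyclic_code_chk : #|cyclic_code_chk n h| = (#|F| ^ (size h).-1)%N.
Proof.
set k := (size h).-1; have sz_gh := size_generator.
have h_gt0 : (0 < size h)%N by rewrite size_poly_gt0 monic_neq0.
have g_neq0 : g != 0 by rewrite monic_neq0 ?generator_monic.
have size_gr (r : {poly F}) : (size r <= k)%N -> (size (g * r)%R <= n)%N.
  move=> le_rk; apply: leq_trans (size_polyMleq _ _) _; move: le_rk sz_gh h_gt0.
  (* [size g] occurs here under two different instance paths; generalizing
     identifies them for [lia]. *)
  rewrite /k; move: (size g) (size h) (size r); lia.
pose enc (v : 'rV[F]_k) := word_of_poly n (g * poly_of_word v).
have enc_inj : injective enc.
  move=> v w /(congr1 (@poly_of_word F n)).
  rewrite !word_of_polyK ?size_gr ?size_poly_of_word //.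
  by move/(mulfI g_neq0)/poly_of_word_inj.
suff -> : cyclic_code_chk n h = enc @: setT.
  by rewrite card_imset // cardsT card_mx mul1n.
apply/setP => c; rewrite mem_cyclic_code_chk; apply/dvdpP/imsetP.
- move=> [r def_c]; have le_rk : (size r <= k)%N.
    have [->|r_neq0] := eqVneq r 0; first by rewrite size_poly0.
    move: (size_poly_of_word c) sz_gh; rewrite def_c size_mul // /k.
    rewrite -size_poly_gt0 in r_neq0; move: r_neq0; move: (size r) (size g); lia.
  exists (word_of_poly k r); first by rewrite inE.
  by rewrite /enc word_of_polyK // mulrC -def_c poly_of_wordK.
- case=> v _ ->; rewrite /enc word_of_polyK ?size_gr ?size_poly_of_word //.
  by exists (poly_of_word v); rewrite mulrC.
Qed.

Lemma size_generator_le : (1 < size h)%N -> (size g <= n)%N.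
Proof. by move: size_generator; move: (size g) (size h); lia. Qed.

Lemma generator_word_in_code :
  (1 < size h)%N -> word_of_poly n g \in cyclic_code_chk n h.
Proof.
by move=> h_gt1; rewrite mem_cyclic_code_chk word_of_polyK ?size_generator_le.
Qed.

End Generator.

Lemma eq_cyclic_code_chk_dvdp (h1 h2 : {poly F}) :
    h1 \is monic -> h1 %| 'X^n - 1 -> (1 < size h1)%N ->
  cyclic_code_chk n h1 = cyclic_code_chk n h2 ->
  ('X^n - 1) %/ h2 %| ('X^n - 1) %/ h1.
Proof.
move=> h1_monic h1_dvd h1_gt1 eq_code.
have := generator_word_in_code h1_monic h1_dvd h1_gt1.
by rewrite eq_code mem_cyclic_code_chk word_of_polyK ?size_generator_le.
Qed.

Lemma cyclic_code_chk_inj (h1 h2 : {poly F}) :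
    h1 \is monic -> h1 %| 'X^n - 1 -> (1 < size h1)%N ->
    h2 \is monic -> h2 %| 'X^n - 1 -> (1 < size h2)%N ->
  cyclic_code_chk n h1 = cyclic_code_chk n h2 -> h1 = h2.
Proof.
move=> h1_monic h1_dvd h1_gt1 h2_monic h2_dvd h2_gt1 eq_code.
have /eqP eq_g : ('X^n - 1) %/ h1 == ('X^n - 1) %/ h2.
  by rewrite -eqp_monic ?generator_monic // /eqp !eq_cyclic_code_chk_dvdp.
apply: (mulfI (monic_neq0 (generator_monic h2_monic h2_dvd))).
by rewrite -{1}eq_g !divpK.
Qed.

End CyclicCode.

Section MinimalPolynomial.
Variables (F L : fieldType) (iota : {rmorphism F -> L}) (x : L) (p : {poly F}).
Hypothesis p_min : is_minpoly iota x p.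

Lemma is_minpoly_monic : p \is monic.
Proof. by case: p_min. Qed.

Lemma is_minpoly_root : root (map_poly iota p) x.
Proof. by case: p_min. Qed.

Lemma is_minpoly_size_gt1 : (1 < size p)%N.
Proof.
rewrite -(size_map_poly iota) (root_size_gt1 _ is_minpoly_root) //.
by rewrite map_poly_eq0 monic_neq0 ?is_minpoly_monic.
Qed.

Lemma is_minpoly_dvdp (r : {poly F}) : root (map_poly iota r) x -> p %| r.
Proof.
move=> rx; have [p_monic px p_least] := p_min; apply/negPn/negP => mod_neq0.
have mod_x : root (map_poly iota (r %% p)) x.
  move: rx; rewrite map_modp !rootE.
  rewrite {1}(divp_eq (map_poly iota r) (map_poly iota p)) hornerD hornerM.
  by rewrite (rootP px) mulr0 add0r.
have := p_least _ mod_neq0 mod_x.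
by rewrite leqNgt ltn_modpN0 ?monic_neq0.
Qed.

Lemma is_minpoly_eq (r : {poly F}) : r \is monic -> root (map_poly iota r) x ->
  (size r <= size p)%N -> p = r.
Proof.
move=> r_monic rx le_rp; have p_dvd_r := is_minpoly_dvdp rx.
apply/eqP; rewrite -eqp_monic ?is_minpoly_monic // -dvdp_size_eqp //.
by rewrite eqn_leq le_rp dvdp_leq ?monic_neq0.
Qed.

Lemma is_minpoly_uniq (p' : {poly F}) : is_minpoly iota x p' -> p = p'.
Proof.
case=> p'_monic p'x p'_least; apply: is_minpoly_eq => //.
by apply: p'_least is_minpoly_root; rewrite monic_neq0 ?is_minpoly_monic.
Qed.

Lemma is_minpoly_size2 : size p = 2%N -> x = iota (- p`_0).
Proof.
move=> size_p2.
have /eqP map_p : map_poly iota p == 'X - x%:P.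
  rewrite -eqp_monic ?map_monic ?is_minpoly_monic ?monicXsubC // eqp_sym.
  rewrite -dvdp_size_eqp ?dvdp_XsubCl ?is_minpoly_root //.
  by rewrite size_XsubC size_map_poly size_p2.
have := congr1 (fun s : {poly L} => s`_0) map_p.
by rewrite coef_map coefB coefX coefC sub0r rmorphN => ->; rewrite opprK.
Qed.

End MinimalPolynomial.

Lemma is_minpoly_im (F L : fieldType) (iota : {rmorphism F -> L}) (c : F) p :
  is_minpoly iota (iota c) p -> p = 'X - c%:P.
Proof.
move=> p_min; apply: (is_minpoly_eq p_min); rewrite ?monicXsubC //.
  by rewrite map_polyXsubC root_XsubC.
by rewrite size_XsubC (is_minpoly_size_gt1 p_min).
Qed.

Section QuadraticExtension.
Variables (F L : finFieldType) (iota : {rmorphism F -> L}) (q : nat).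
Hypotheses (card_F : #|F| = q) (card_L : #|L| = (q ^ 2)%N).

Lemma q_gt1 : (1 < q)%N.
Proof. by rewrite -card_F finNzRing_gt1. Qed.

Lemma expr_q2 (x : L) : x ^+ (q ^ 2) = x.
Proof. by rewrite -card_L expf_card. Qed.

Lemma expr_qK (x : L) : (x ^+ q) ^+ q = x.
Proof. by rewrite -exprM mulnn expr_q2. Qed.

Lemma exprD_q (x y : L) : (x + y) ^+ q = x ^+ q + y ^+ q.
Proof.
have [p p_pr p_char] := finPcharP F.
have p_charL : p \in [pchar L] by rewrite (fmorph_pchar iota).
apply: exprDn_pchar; rewrite (eq_pnat _ (pcharf_eq p_charL)).
by rewrite -card_F (card_pprimeChar p_char) pnatX pnat_id.
Qed.

Lemma expr_q_rmorph (c : F) : iota c ^+ q = iota c.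
Proof. by rewrite -rmorphXn -card_F expf_card. Qed.

Lemma expr_q_fixed (x : L) : x ^+ q = x -> exists c, x = iota c.
Proof.
move=> x_fixed.
have gen_map : map_poly iota ('X^#|F| - 'X) =
    \prod_(a <- map iota (enum F)) ('X - a%:P).
  rewrite finField_genPoly rmorph_prod big_map big_enum /=.
  by apply: eq_bigr => c _; rewrite map_polyXsubC.
have : root (map_poly iota ('X^#|F| - 'X)) x.
  by rewrite rmorphB /= map_polyXn map_polyX rootE !hornerE card_F x_fixed subrr.
by rewrite gen_map root_prod_XsubC => /mapP [c _ ->]; exists c.
Qed.

Lemma conjugate_poly_over (y : L) : exists r : {poly F},
  map_poly iota r = ('X - y%:P) * ('X - (y ^+ q)%:P).
Proof.
have [s def_s] : exists s, y + y ^+ q = iota s.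
  by apply: expr_q_fixed; rewrite exprD_q expr_qK addrC.
have [t def_t] : exists t, y * y ^+ q = iota t.
  by apply: expr_q_fixed; rewrite exprMn expr_qK mulrC.
exists ('X^2 - s%:P * 'X + t%:P).
rewrite rmorphD rmorphB rmorphXn rmorphM /= map_polyX !map_polyC /=.
by rewrite -def_s -def_t polyCD polyCM; ring.
Qed.

Lemma is_minpoly_conjugate (y : L) p : y ^+ q != y -> is_minpoly iota y p ->
  map_poly iota p = ('X - y%:P) * ('X - (y ^+ q)%:P).
Proof.
move=> y_unfixed p_min; have [r map_r] := conjugate_poly_over y.
have r_monic : r \is monic by rewrite -(map_monic iota) map_r rpredM ?monicXsubC.
have r_y : root (map_poly iota r) y by rewrite map_r rootM root_XsubC eqxx.
have size_r : size r = 3%N.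
  by rewrite -(size_map_poly iota) map_r size_mul ?polyXsubC_eq0 // !size_XsubC.
have size_p_neq2 : size p != 2.
  apply: contra y_unfixed => /eqP/(is_minpoly_size2 p_min) ->.
  by rewrite expr_q_rmorph.
have le_pr : (size p <= size r)%N.
  by rewrite dvdp_leq ?monic_neq0 ?(is_minpoly_dvdp p_min).
rewrite -map_r (is_minpoly_eq p_min r_monic r_y) //.
by move: le_pr (is_minpoly_size_gt1 p_min) size_p_neq2; rewrite size_r; lia.
Qed.

End QuadraticExtension.

Lemma int_divmod (a : int) (m : nat) : (0 < m)%N ->
  exists2 r : nat, (r < m)%N & exists k : int, a = k * m%:Z + r%:Z.
Proof.
move=> m_gt0; have m_neq0 : m%:Z != 0 by rewrite -lt0n in m_gt0 *.
exists `|(a %% m%:Z)%Z|%N; first by rewrite -ltz_nat gez0_abs ?modz_ge0 ?ltz_pmod.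
by exists (a %/ m%:Z)%Z; rewrite gez0_abs ?modz_ge0 // -divz_eq.
Qed.

Section Parametrization.
Variables (F L : finFieldType) (iota : {rmorphism F -> L}) (q : nat).
Hypotheses (card_F : #|F| = q) (card_L : #|L| = (q ^ 2)%N).
Variables (n : nat) (gamma : L).
Hypotheses (n_factor : n = ((q - 1) * (q + 1))%N)
  (gamma_prim : n.-primitive_root gamma).
Variable h : int -> {poly F}.
Hypothesis h_min : forall a : int, is_minpoly iota (gamma ^ (- a)) (h a).

Let one_lt_q : (1 < q)%N := q_gt1 card_F.

Lemma n_gt0 : (0 < n)%N.
Proof. by rewrite n_factor; move: one_lt_q; lia. Qed.

Lemma q1_lt_n : (q - 1 < n)%N.
Proof. by rewrite n_factor; move: one_lt_q; nia. Qed.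

Lemma q_coprime_n : coprime q n.
Proof.
rewrite n_factor coprimeMr addn1 coprimenS andbT.
by rewrite -{1}(subnK (ltnW one_lt_q)) addn1 coprimeSn.
Qed.

Lemma conj_coprime u : coprime u n -> coprime ((u * q) %% n) n.
Proof. by move=> u_coprime; rewrite coprime_modl coprimeMl u_coprime q_coprime_n. Qed.

Definition zeta (k : nat) : L := (gamma ^+ k)^-1.

Lemma exprz_gamma_opp (k : nat) : gamma ^ (- k%:Z) = zeta k.
Proof. by rewrite /zeta -exprnN. Qed.

Lemma zeta_eq a b : (zeta a == zeta b) = (a == b %[mod n]).
Proof. by rewrite /zeta (inj_eq invr_inj) (eq_prim_root_expr gamma_prim). Qed.

Lemma zeta_expr_q k : zeta k ^+ q = zeta (k * q).
Proof. by rewrite /zeta exprVn exprM. Qed.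

Lemma zeta_expr_n k : zeta k ^+ n = 1.
Proof.
by rewrite /zeta exprVn -exprM mulnC exprM (prim_expr_order gamma_prim) expr1n invr1.
Qed.

Lemma h_periodic (a b k : int) : a = b + k * n%:Z -> h a = h b.
Proof.
move=> def_a; apply: (is_minpoly_uniq (h_min a)).
have gamma_neq0 : gamma != 0.
  apply/eqP => gamma0; have := prim_expr_order gamma_prim.
  by rewrite gamma0 expr0n gtn_eqF ?n_gt0 // => /eqP; rewrite eq_sym oner_eq0.
suff -> : gamma ^ (- a) = gamma ^ (- b) by [].
have gamma_n : gamma ^ n%:Z = 1 := prim_expr_order gamma_prim.
rewrite def_a opprD expfzDr // -mulNr [_ * n%:Z]mulrC -exprz_exp gamma_n.
by rewrite exp1rz mulr1.
Qed.

(* The code [C_((q+1)e1, e2)] is indexed by [e = e1 mod (q-1)] and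
   [u = e2 - (q+1)e1 mod n]; both gcd conditions then say [coprime u n]. *)
Definition ex1 (e : nat) := ((q + 1) * e)%N.
Definition ex2 (e u : nat) := (u + (q + 1) * e)%N.
Definition check_poly (e u : nat) : {poly F} := h (ex1 e)%:Z * h (ex2 e u)%:Z.

Lemma ex1_lt_n e : (e < q - 1)%N -> (ex1 e < n)%N.
Proof. by rewrite n_factor /ex1 => lt_e; move: one_lt_q; nia. Qed.

Lemma ex2_mulq e u : (ex2 e u * q = e * n + (u * q + ex1 e))%N.
Proof. by rewrite /ex2 /ex1 n_factor; move: one_lt_q; nia. Qed.

Lemma zeta_ex1_fixed e : zeta (ex1 e) ^+ q = zeta (ex1 e).
Proof.
apply/eqP; rewrite zeta_expr_q zeta_eq.
have -> : (ex1 e * q = e * n + ex1 e)%N by rewrite n_factor /ex1; move: one_lt_q; nia.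
by rewrite modnMDl.
Qed.

Lemma zeta_ex2_conj e u : zeta (ex2 e ((u * q) %% n)) = zeta (ex2 e u) ^+ q.
Proof.
apply/eqP; rewrite zeta_expr_q zeta_eq ex2_mulq modnMDl.
by rewrite /ex2 -/(ex1 e) modnDml eqxx.
Qed.

Lemma ex2_mulq_neq e u : coprime u n -> (ex2 e u * q != ex2 e u %[mod n]).
Proof.
move=> u_coprime; rewrite eqn_mod_dvd; last by rewrite leq_pmulr // ltnW.
rewrite -{2}(muln1 (ex2 e u)) -mulnBr.
have -> : (ex2 e u * (q - 1) = u * (q - 1) + e * n)%N by rewrite /ex2 n_factor; nia.
rewrite dvdn_addl; last exact: dvdn_mull (dvdnn n).
rewrite Gauss_dvdr; last by rewrite coprime_sym.
by apply/negP => /dvdn_leq; rewrite subn_gt0 one_lt_q leqNgt q1_lt_n => /(_ isT).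
Qed.

Lemma zeta_ex2_unfixed e u : coprime u n -> zeta (ex2 e u) ^+ q != zeta (ex2 e u).
Proof.
move=> u_coprime; apply/eqP => /eqP.
by rewrite zeta_expr_q zeta_eq (negbTE (ex2_mulq_neq e u_coprime)).
Qed.

Lemma h_ex1 e : exists c, zeta (ex1 e) = iota c /\ h (ex1 e)%:Z = 'X - c%:P.
Proof.
have [c def_c] := expr_q_fixed iota card_F (zeta_ex1_fixed e).
exists c; split => //.
by have := h_min (ex1 e)%:Z; rewrite exprz_gamma_opp def_c => /is_minpoly_im.
Qed.

Lemma map_h_ex2 e u : coprime u n -> map_poly iota (h (ex2 e u)%:Z) =
  ('X - (zeta (ex2 e u))%:P) * ('X - (zeta (ex2 e u) ^+ q)%:P).
Proof.
move=> u_coprime; apply: (is_minpoly_conjugate card_F card_L).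
  exact: zeta_ex2_unfixed.
by rewrite -exprz_gamma_opp.
Qed.

Lemma map_check_poly e u : coprime u n -> map_poly iota (check_poly e u) =
  \prod_(z <- [:: zeta (ex1 e); zeta (ex2 e u); zeta (ex2 e u) ^+ q]) ('X - z%:P).
Proof.
move=> u_coprime; rewrite /check_poly; have [c [def_c ->]] := h_ex1 e.
by rewrite rmorphM /= map_h_ex2 // map_polyXsubC -def_c !big_cons big_nil mulr1.
Qed.

Lemma check_poly_monic e u : check_poly e u \is monic.
Proof. by rewrite rpredM ?(is_minpoly_monic (h_min _)). Qed.

Lemma size_check_poly e u : coprime u n -> size (check_poly e u) = 4%N.
Proof.
by move=> u_coprime; rewrite -(size_map_poly iota) map_check_poly // size_prod_XsubC.
Qed.

Lemma check_poly_dvd e u : coprime u n -> check_poly e u %| 'X^n - 1.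
Proof.
move=> u_coprime; have z2_unfixed := zeta_ex2_unfixed e u_coprime.
rewrite -(dvdp_map iota) rmorphB /= map_polyXn rmorph1 map_check_poly //.
apply: uniq_roots_dvdp.
  apply/allP => z; rewrite !inE => /or3P[] /eqP ->; rewrite rootE !hornerE;
  by rewrite ?zeta_expr_n ?subrr // -exprM mulnC exprM zeta_expr_n expr1n subrr.
rewrite uniq_rootsE /= !inE !negb_or !andbT -!andbA; apply/and3P; split.
- by apply: contra z2_unfixed => /eqP <-; rewrite zeta_ex1_fixed.
- apply: contra z2_unfixed => /eqP z1_conj.
  by rewrite -{2}(expr_qK card_L (zeta (ex2 e u))) -z1_conj zeta_ex1_fixed z1_conj.
- by rewrite eq_sym.
Qed.

Lemma card_code_check_poly e u :
  coprime u n -> #|cyclic_code_chk n (check_poly e u)| = (q ^ 3)%N.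
Proof.
move=> u_coprime; rewrite card_cyclic_code_chk ?n_gt0 ?check_poly_monic
  ?check_poly_dvd ?size_check_poly ?card_F //.
Qed.

Lemma check_poly_conj e u :
  coprime u n -> check_poly e ((u * q) %% n) = check_poly e u.
Proof.
move=> u_coprime; rewrite /check_poly; congr (_ * _); apply: (map_poly_inj iota).
by rewrite !map_h_ex2 ?conj_coprime // zeta_ex2_conj (expr_qK card_L) mulrC.
Qed.

Lemma root_check_poly e u z :
  coprime u n -> root (map_poly iota (check_poly e u)) z =
  [|| z == zeta (ex1 e), z == zeta (ex2 e u) | z == zeta (ex2 e u) ^+ q].
Proof. by move=> u_coprime; rewrite map_check_poly // root_prod_XsubC !inE. Qed.

Lemma fixed_root_check_poly e u z : coprime u n ->
  root (map_poly iota (check_poly e u)) z -> z ^+ q = z -> z = zeta (ex1 e).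
Proof.
move=> u_coprime; have z2_unfixed := zeta_ex2_unfixed e u_coprime.
rewrite root_check_poly // => /or3P[/eqP -> // | /eqP -> | /eqP ->] z_fixed.
- by rewrite z_fixed eqxx in z2_unfixed.
- by rewrite (expr_qK card_L) in z_fixed; rewrite -z_fixed eqxx in z2_unfixed.
Qed.

Lemma zeta_ex2_inj e u u' : (u < n)%N -> (u' < n)%N ->
  zeta (ex2 e u) = zeta (ex2 e u') -> u = u'.
Proof.
by move=> lt_un lt_u'n /eqP; rewrite zeta_eq /ex2 eqn_modDr !modn_small // => /eqP.
Qed.

Lemma code_check_poly_eq e u e' u' : (e < q - 1)%N -> (e' < q - 1)%N ->
    (u < n)%N -> (u' < n)%N -> coprime u n -> coprime u' n ->
  cyclic_code_chk n (check_poly e u) = cyclic_code_chk n (check_poly e' u') ->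
  e' = e /\ (u' = u \/ u' = ((u * q) %% n)%N).
Proof.
move=> lt_e lt_e' lt_u lt_u' u_coprime u'_coprime eq_code.
have eq_check : check_poly e' u' = check_poly e u.
  by apply: cyclic_code_chk_inj (esym eq_code);
    rewrite ?n_gt0 ?check_poly_monic ?check_poly_dvd ?size_check_poly.
have root_eq z : root (map_poly iota (check_poly e' u')) z ->
    root (map_poly iota (check_poly e u)) z.
  by rewrite eq_check.
have eq_e : e' = e.
  have /eqP : zeta (ex1 e') = zeta (ex1 e).
    apply: (fixed_root_check_poly u_coprime) (zeta_ex1_fixed e').
    by apply: root_eq; rewrite root_check_poly // eqxx.
  rewrite zeta_eq !modn_small ?ex1_lt_n // /ex1 eqn_pmul2l ?addn_gt0 ?orbT //.
  by move/eqP.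
subst e'; split=> //; have z2_unfixed := zeta_ex2_unfixed e u'_coprime.
have /root_eq : root (map_poly iota (check_poly e u')) (zeta (ex2 e u')).
  by rewrite root_check_poly // eqxx orbT.
rewrite root_check_poly // => /or3P[/eqP z1 | /eqP z2 | /eqP z3].
- by rewrite z1 zeta_ex1_fixed eqxx in z2_unfixed.
- by left; apply: zeta_ex2_inj lt_u' lt_u z2.
- right; apply: zeta_ex2_inj lt_u' (ltn_pmod _ n_gt0) _.
  rewrite zeta_ex2_conj; exact: z3.
Qed.

Definition params : {set 'I_(q - 1) * 'I_n} :=
  setX [set: 'I_(q - 1)] [set u : 'I_n | coprime u n].

Definition param_code (p : 'I_(q - 1) * 'I_n) :=
  cyclic_code_chk n (check_poly p.1 p.2).

Definition conj_param (u : 'I_n) : 'I_n := Ordinal (ltn_pmod (u * q) n_gt0).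

Lemma param_code_fiber p : p \in params ->
  [set p' in params | param_code p' == param_code p] = [set p; (p.1, conj_param p.2)].
Proof.
case: p => e u; rewrite in_setX !inE /= => u_coprime.
apply/setP => -[e' u']; rewrite !(inE, in_setX) /= !xpair_eqE.
apply/andP/orP => [[u'_coprime /eqP eq_code] | eq_p'].
  have [eq_e eq_u] := code_check_poly_eq (ltn_ord e) (ltn_ord e') (ltn_ord u)
    (ltn_ord u') u_coprime u'_coprime (esym eq_code).
  rewrite -!val_eqE /= eq_e; case: eq_u => ->; [left | right]; exact/andP.
case: eq_p' => /andP[/eqP -> /eqP ->]; first by rewrite u_coprime.
by rewrite conj_coprime // /param_code /= check_poly_conj.
Qed.

Lemma card_param_code_fiber p : p \in params ->
  #|[set p' in params | param_code p' == param_code p]| = 2%N.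
Proof.
move=> p_param; rewrite param_code_fiber // cards2.
case: p p_param => e u; rewrite in_setX !inE /= => u_coprime.
suff /negbTE -> : (e, u) != (e, conj_param u) by [].
apply/eqP => -[/(congr1 (zeta \o ex2 e \o val)) /=]; rewrite zeta_ex2_conj => eq_z.
by have := zeta_ex2_unfixed e u_coprime; rewrite -eq_z eqxx.
Qed.

Lemma card_param_code p : p \in params -> #|param_code p| = (q ^ 3)%N.
Proof.
by case: p => e u; rewrite in_setX !inE => /= u_coprime; apply: card_code_check_poly.
Qed.

Lemma card_params : #|params| = ((q - 1) * totient n)%N.
Proof.
rewrite cardsX cardsT card_ord totient_count_coprime big_mkord -sum1_card.
rewrite big_mkcond /=; congr (_ * _)%N.
by apply: eq_bigr => u _; rewrite inE coprime_sym.
Qed.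

Lemma card_param_codes : (#|param_code @: params| * 2 = (q - 1) * totient n)%N.
Proof.
rewrite -card_params -[#|params|]sum1_card (partition_big_imset param_code) /=.
rewrite -sum_nat_const; apply: eq_bigr => C /imsetP [p p_param ->].
rewrite -(card_param_code_fiber p_param) -sum1_card.
by apply: eq_bigl => p'; rewrite inE.
Qed.

Lemma param_code_admissible p : p \in params -> exists e1 e2 : int,
  [/\ gcdz (q - 1)%:Z (2 * e1 - e2) = 1, gcdz (q + 1)%:Z e2 = 1
     & param_code p = cyclic_code_chk n (h ((q + 1)%:Z * e1) * h e2)].
Proof.
case: p => -[e ?] [u ?]; rewrite in_setX !inE /= => u_coprime.
move: u_coprime; rewrite {1}n_factor coprimeMr.
case/andP=> /eqP u_coprime1 /eqP u_coprime2.
exists e%:Z, (ex2 e u)%:Z; split.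
- have -> : 2 * e%:Z - (ex2 e u)%:Z = (- e%:Z) * (q - 1)%:Z + - u%:Z.
    by rewrite /ex2; move: one_lt_q; nia.
  by rewrite gcdzMDl gcdzN /gcdz /= gcdnC u_coprime1.
- have -> : (ex2 e u)%:Z = e%:Z * (q + 1)%:Z + u%:Z by rewrite /ex2; lia.
  by rewrite gcdzMDl /gcdz /= gcdnC u_coprime2.
- by rewrite /param_code /check_poly /ex1 PoszM.
Qed.

Lemma admissible_param_code (e1 e2 : int) :
    gcdz (q - 1)%:Z (2 * e1 - e2) = 1 -> gcdz (q + 1)%:Z e2 = 1 ->
  cyclic_code_chk n (h ((q + 1)%:Z * e1) * h e2) \in param_code @: params.
Proof.
have q1_gt0 : (0 < q - 1)%N by rewrite subn_gt0.
move=> gcd1 gcd2; have nZ : n%:Z = (q - 1)%:Z * (q + 1)%:Z by rewrite n_factor PoszM.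
have [e lt_e [k def_e1]] := int_divmod e1 q1_gt0.
have [u lt_u [j def_u]] := int_divmod (e2 - (q + 1)%:Z * e1) n_gt0.
have u_coprime : coprime u n.
  rewrite n_factor coprimeMr ![coprime u _]coprime_sym.
  change (coprimez (q - 1)%:Z u%:Z && coprimez (q + 1)%:Z u%:Z).
  rewrite /coprimez; apply/andP; split; apply/eqP.
    have -> : u%:Z = - (e1 + j * (q + 1)%:Z) * (q - 1)%:Z + - (2 * e1 - e2).
      by move: def_u; rewrite nZ; move: one_lt_q; nia.
    by rewrite gcdzMDl gcdzN gcd1.
  have -> : u%:Z = - (e1 + j * (q - 1)%:Z) * (q + 1)%:Z + e2.
    by move: def_u; rewrite nZ; nia.
  by rewrite gcdzMDl gcd2.
apply/imsetP; exists (Ordinal lt_e, Ordinal lt_u); first by rewrite in_setX !inE.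
rewrite /param_code /check_poly /=; congr (cyclic_code_chk _ (_ * _)).
  by apply: (h_periodic (k := k)); rewrite def_e1 nZ /ex1 PoszM; ring.
apply: (h_periodic (k := j + k)); rewrite /ex2 PoszD PoszM.
by move: def_u; rewrite def_e1 nZ; nia.
Qed.

End Parametrization.

Theorem theorem4 (F L : finFieldType) (iota : {rmorphism F -> L}) (q : nat)
    (hF : #|F| = q) (hL : #|L| = (q ^ 2)%N)
    (gamma : L) (hgamma : (q ^ 2 - 1)%N.-primitive_root gamma)
    (h : int -> {poly F})
    (hh : forall a : int, is_minpoly iota (gamma ^ (- a)) (h a)) :
  exists S : {set {set 'rV[F]_(q ^ 2 - 1)}},
    (forall C : {set 'rV[F]_(q ^ 2 - 1)},
       C \in S <->
       exists e1 e2 : int,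
         [/\ gcdz (q - 1)%:Z (2 * e1 - e2) = 1,
             gcdz (q + 1)%:Z e2 = 1,
             C = cyclic_code_chk (q ^ 2 - 1) (h ((q + 1)%:Z * e1) * h e2)
           & #|C| = (q ^ 3)%N]) /\
    (#|S| * 2 = totient (q ^ 2 - 1) * (q - 1))%N.
Proof.
have n_factor : (q ^ 2 - 1 = (q - 1) * (q + 1))%N by rewrite -subn_sqr.
exists (param_code h @: params q (q ^ 2 - 1)); split; last first.
  by rewrite (card_param_codes hF hL n_factor hgamma hh) mulnC.
move=> C; split => [/imsetP [p p_param ->] | [e1 [e2 [gcd1 gcd2 -> _]]]].
  have [e1 [e2 [gcd1 gcd2 def_p]]] :=
    param_code_admissible hF hL n_factor hgamma h p_param.
  exists e1, e2; split => //.
  exact: (card_param_code hF hL n_factor hgamma hh p_param).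
exact: (admissible_param_code hF hL n_factor hgamma hh gcd1 gcd2).
Qed.
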